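(* Let $f_0(1)=f_0(2)=1$ and $f_0(n)=0$ for $n\ge3$. Then for every $m\ge1$ and $1\le k\le n$, $c_m(n,k)$ equals the number of words of length $n-1$ over the alphabet $\{0,1,\ldots,m\}$ which have exactly $k-1$ letters equal to $m$ and in which all zeros are isolated (no two zeros are adjacent). Also, $c_1(n,k)=\binom{k}{n-k}$ for $1\le k\le n$, and for $m>1$ and $\lceil n/2\rceil\ge k\ge1$, \[c_m(n,k)=\sum_{j=\lceil\frac{n}{2}\rceil-k}^{n-k}(m-1)^{j}\binom{j+k-1}{k-1}\binom{j+k}{n-j-k}.\]
   Context: For $m\ge 1$, $f_m$ is the invert transform of $f_{m-1}$, i.e. $f_m(n)=f_{m-1}(n)+\sum_{i=1}^{n-1}f_{m-1}(i)f_m(n-i)$ for $n\ge1$. For $m\ge1$ the numbers $c_m(n,k)$, $0\le k\le n$, are defined by $c_m(0,0)=1$, $c_m(n,0)=0$ for $n\ge1$, and $c_m(n,k)=\sum_{i=1}^{n-k+1}f_{m-1}(i)\,c_m(n-i,k-1)$ for $1\le k\le n$. Words may be empty; $\binom{a}{b}=0$ when $b>a$ or $b<0$. *)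

From mathcomp Require Import all_boot.
Set Implicit Arguments. Unset Strict Implicit. Unset Printing Implicit Defensive.

Fixpoint isolated_zeros (s : seq nat) : bool :=
  match s with
  | x :: ((y :: _) as t) => ~~ ((x == 0) && (y == 0)) && isolated_zeros t
  | _ => true
  end.

Definition words_count (m len r : nat) : nat :=
  #|[set w : len.-tuple 'I_m.+1 |
       (count (fun x : 'I_m.+1 => val x == m) w == r)
       && isolated_zeros (map val w)]|.

(* The generating function of f_0 is G = x + x^2, and the invert transform
   F |-> F / (1 - F) sends G / (1 - A G) to G / (1 - (A + 1) G); hence f_m has
   generating function G / (1 - m G) and c_m(n, k) = [x^n] (G / (1 - A G))^k
   with A = m - 1.  Expanding (1 - A G)^-k binomially and using
   [x^n] G^j = C(j, n - j) gives the closed formula.  Sorting the words by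
   their first letter shows that their numbers obey the recursion in n which
   (1 - A G) F^(k+1) = G F^k imposes on the coefficients of F = G / (1 - A G).
   Power series are represented by polynomials compared up to a degree N. *)

From mathcomp Require Import all_boot all_algebra.
From mathcomp Require Import ring zify.
Set Implicit Arguments. Unset Strict Implicit. Unset Printing Implicit Defensive.
Import GRing.Theory Num.Theory.

Section BinomialSeries.
Variable R : comPzRingType.
Local Open Scope ring_scope.
Implicit Types y : R.

Definition binom_series y N k : R := \sum_(j < N) 'C(j + k, k)%:R * y ^+ j.

Lemma binom_series0 y N : (1 - y) * binom_series y N 0 = 1 - y ^+ N.
Proof.
rewrite /binom_series (eq_bigr (fun j : 'I_N => y ^+ j)) => [|j _]; last first.
  by rewrite addn0 bin0 mul1r.
by rewrite -[1 - y]opprB -[1 - y ^+ N]opprB subrX1 mulNr.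
Qed.

Lemma binom_seriesS y N k :
  (1 - y) * binom_series y N k.+1 = binom_series y N k - 'C(N + k, k.+1)%:R * y ^+ N.
Proof.
elim: N => [|N IH].
  by rewrite /binom_series !big_ord0 add0n bin_small // mul0r subr0 mulr0.
rewrite /binom_series !big_ord_recr /= mulrDr -/(binom_series _ _ _) IH.
by rewrite /binom_series addnS binS natrD exprS; ring.
Qed.

End BinomialSeries.

Section Agreement.
Variable R : nzRingType.
Local Open Scope ring_scope.
Implicit Types p q r u : {poly R}.

Definition agree N p q := [forall i : 'I_N.+1, p`_i == q`_i].

Lemma agreeP N p q : reflect (forall n, (n <= N)%N -> p`_n = q`_n) (agree N p q).
Proof.
apply: (iffP forallP) => [h n hn | h i]; last by apply/eqP/h; rewrite -ltnS.
by have /eqP := h (Ordinal (hn : (n < N.+1)%N)).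
Qed.

Lemma agree_sym N p q : agree N p q -> agree N q p.
Proof. by move=> /agreeP h; apply/agreeP => n hn; rewrite h. Qed.

Lemma agree_trans N p q r : agree N p q -> agree N q r -> agree N p r.
Proof. by move=> /agreeP h1 /agreeP h2; apply/agreeP => n hn; rewrite h1 ?h2. Qed.

Lemma agreeD N p q p' q' : agree N p q -> agree N p' q' -> agree N (p + p') (q + q').
Proof. by move=> /agreeP h1 /agreeP h2; apply/agreeP => n hn; rewrite !coefD h1 ?h2. Qed.

Lemma agreeMl N u p q : agree N p q -> agree N (u * p) (u * q).
Proof.
move=> /agreeP h; apply/agreeP => n hn; rewrite !coefM; apply: eq_bigr => i _.
by rewrite h // (leq_trans (leq_subr _ _)).
Qed.

Lemma agreeMr N u p q : agree N p q -> agree N (p * u) (q * u).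
Proof.
move=> /agreeP h; apply/agreeP => n hn; rewrite !coefM; apply: eq_bigr => i _.
by rewrite h // (leq_trans _ hn) // -ltnS.
Qed.

Lemma agreeM N p q p' q' : agree N p q -> agree N p' q' -> agree N (p * p') (q * q').
Proof. by move=> h1 h2; exact: agree_trans (agreeMr p' h1) (agreeMl q h2). Qed.

Lemma agree_cancel N u p q : u`_0 = 1 -> agree N (u * p) (u * q) -> agree N p q.
Proof.
move=> u0 /agreeP h; apply/agreeP; elim/ltn_ind => n IH hn.
have := h n hn; rewrite !coefM !big_ord_recl u0 !mul1r !subn0.
rewrite (eq_bigr (fun i : 'I_n => u`_i.+1 * q`_(n - i.+1))) => [/addIr //|[i hi] _ /=].
rewrite /bump /= add1n IH //; lia.
Qed.

End Agreement.

Section Convolution.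
Variable R : nzRingType.
Local Open Scope ring_scope.

Lemma coef_exp_small (p : {poly R}) k n : p`_0 = 0 -> (n < k)%N -> (p ^+ k)`_n = 0.
Proof.
move=> p0; elim: k n => // k IH n hn; rewrite exprS coefM big_ord_recl p0 mul0r add0r.
by rewrite big1 // => -[i hi] _ /=; rewrite /bump /= add1n IH ?mulr0 //; lia.
Qed.

Lemma coef_invert_transform N (F H : {poly R}) (a b : nat -> R) :
  F`_0 = 0 -> H`_0 = 0 -> agree N H (F + F * H) ->
  (forall i, (0 < i <= N)%N -> a i = F`_i) ->
  (forall i, (0 < i <= N)%N -> b i = a i + \sum_(1 <= j < i) a j * b (i - j)%N) ->
  forall i, (0 < i <= N)%N -> b i = H`_i.
Proof.
move=> F0 H0 /agreeP HFH aF bE; elim/ltn_ind => -[//|i] IH /andP[_ iN].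
rewrite bE ?iN // HFH // coefD aF ?iN //; congr (_ + _).
rewrite coefM big_ord_recl big_ord_recr /= F0 subnn H0 mul0r mulr0 add0r addr0.
rewrite big_add1 /= big_mkord; apply: eq_bigr => -[j hj] _ /=.
by rewrite /bump /= add1n aF ?IH //; lia.
Qed.

Lemma coef_convolution_power N (F : {poly R}) (a : nat -> R) (c : nat -> nat -> R) :
  F`_0 = 0 -> (forall i, (0 < i <= N)%N -> a i = F`_i) ->
  c 0 0 = 1 -> (forall n, (0 < n)%N -> c n 0 = 0) ->
  (forall n k, (k < n)%N -> c n k.+1 = \sum_(1 <= i < (n - k)%N.+1) a i * c (n - i)%N k) ->
  forall n k, (k <= n <= N)%N -> c n k = (F ^+ k)`_n.
Proof.
move=> F0 aF c00 cn0 cE n k; elim: k n => [|k IH] n /andP[kn nN].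
  by rewrite expr0 coef1; case: n {kn nN} => [|n]; [rewrite c00 | rewrite cn0].
rewrite cE // exprS coefM -(big_mkord xpredT (fun i => F`_i * (F ^+ k)`_(n - i)%N)).
rewrite [RHS](big_cat_nat _ (n := (n - k)%N.+1)) //=; last by lia.
rewrite [in RHS]big_ltn // F0 mul0r add0r.
rewrite [X in _ = _ + X]big_nat_cond [X in _ = _ + X]big1 ?addr0 => [|i].
  by apply: eq_big_nat => i /andP[i0 hi]; rewrite aF ?IH //; lia.
by case/andP=> /andP[hi hin] _; rewrite coef_exp_small ?mulr0 //; lia.
Qed.

End Convolution.

Section Series.
Variable R : comNzRingType.
Local Open Scope ring_scope.
Implicit Types (A : R) (p q : {poly R}).

Definition gf0 : {poly R} := 'X + 'X^2.

Lemma expr_gf0 a : gf0 ^+ a = 'X^a * ('X + 1) ^+ a.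
Proof. by rewrite -exprMn /gf0 mulrDr mulr1 -expr2 addrC. Qed.

Lemma coef_XD1X a i : (('X + 1 : {poly R}) ^+ a)`_i = 'C(a, i)%:R.
Proof.
elim: a i => [|a IH] i; first by rewrite expr0 coef1 bin0n.
rewrite exprS mulrDl mul1r coefD coefXM IH.
by case: i => [|i] /=; rewrite IH ?add0r ?bin0 // binS natrD addrC.
Qed.

Lemma coef_gf0X a n : (gf0 ^+ a)`_n = if (a <= n)%N then 'C(a, n - a)%:R else 0.
Proof. by rewrite expr_gf0 coefXnM coef_XD1X ltnNge; case: leqP. Qed.

Lemma coef_gf0XM_small a p n : (n < a)%N -> (gf0 ^+ a * p)`_n = 0.
Proof. by move=> na; rewrite expr_gf0 -mulrA coefXnM na. Qed.

Lemma coef_gf0M p n : (gf0 * p)`_n.+1 = p`_n + (if n is n'.+1 then p`_n' else 0).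
Proof.
rewrite /gf0 mulrDl coefD coefXM coefXnM /=.
by case: n => [|n] //=; rewrite !subSS subn0.
Qed.

Lemma agree_sub_gf0XM N a p q : (N < a)%N -> agree N (p - gf0 ^+ a * q) p.
Proof.
move=> Na; apply/agreeP => n nN.
by rewrite coefB coef_gf0XM_small ?subr0 // (leq_ltn_trans nN).
Qed.

Definition den A := 1 - A%:P * gf0.

(* [gfpow A N k] truncates the power series [(gf0 / (1 - A gf0))^(k+1)]. *)
Definition gfpow A N k := gf0 ^+ k.+1 * binom_series (A%:P * gf0) N k.

Lemma coef0_den A : (den A)`_0 = 1.
Proof.
by rewrite /den coefB coef1 coefCM /gf0 coefD coefX coefXn /= addr0 mulr0 subr0.
Qed.

Lemma coef_gfpow_small A N k n : (n <= k)%N -> (gfpow A N k)`_n = 0.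
Proof. by move=> nk; rewrite /gfpow coef_gf0XM_small. Qed.

Lemma agree_den_gfpow0 A N : agree N (den A * gfpow A N 0) gf0.
Proof.
have -> : den A * gfpow A N 0 = gf0 - gf0 ^+ N.+1 * A%:P ^+ N.
  by rewrite /gfpow mulrCA binom_series0 exprMn expr1 (exprS gf0 N); ring.
exact: agree_sub_gf0XM.
Qed.

Lemma agree_den_gfpowS A N k : agree N (den A * gfpow A N k.+1) (gf0 * gfpow A N k).
Proof.
have -> : den A * gfpow A N k.+1 =
    gf0 * gfpow A N k - gf0 ^+ (N + k.+2) * ('C(N + k, k.+1)%:R * A%:P ^+ N).
  by rewrite /gfpow mulrCA binom_seriesS exprMn exprD !exprS; ring.
by apply: agree_sub_gf0XM; rewrite addnS ltnS leq_addr.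
Qed.

Lemma agree_gfpow0X A N k : agree N (gfpow A N 0 ^+ k.+1) (gfpow A N k).
Proof.
elim: k => [|k IH]; first by rewrite expr1; apply/agreeP.
rewrite exprS; apply: agree_trans (agreeMl _ IH) _.
apply: (agree_cancel (coef0_den A)); rewrite mulrA.
exact: agree_trans (agreeMr _ (agree_den_gfpow0 A N)) (agree_sym (agree_den_gfpowS A N k)).
Qed.

Lemma agree_gfpow0_invert A N :
  agree N (gfpow (A + 1) N 0) (gfpow A N 0 + gfpow A N 0 * gfpow (A + 1) N 0).
Proof.
set F := gfpow A N 0; set H := gfpow (A + 1) N 0.
apply: (@agree_cancel _ _ (den A * den (A + 1))); first by rewrite coef0M !coef0_den mulr1.
have dF := agree_den_gfpow0 A N; have dH := agree_den_gfpow0 (A + 1) N.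
rewrite -mulrA; apply: agree_trans (agreeMl _ dH) _.
have -> : den A * gf0 = den (A + 1) * gf0 + gf0 * gf0 by rewrite /den rmorphD /= polyC1; ring.
have -> : den A * den (A + 1) * (F + F * H) =
    den (A + 1) * (den A * F) + (den A * F) * (den (A + 1) * H) by ring.
by apply/agree_sym/agreeD; [apply: agreeMl | apply: agreeM].
Qed.

Lemma coef_gfpow A N k n : (k < n)%N -> (n <= N)%N -> (gfpow A N k)`_n =
  \sum_(0 <= j < (n - k.+1)%N.+1)
    A ^+ j * 'C(j + k, k)%:R * 'C(j + k.+1, n - j - k.+1)%:R.
Proof.
move=> kn nN; rewrite /gfpow /binom_series mulr_sumr coef_sum.
pose t j := A ^+ j * 'C(j + k, k)%:R * (gf0 ^+ (j + k.+1))`_n.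
rewrite (eq_bigr (t \o val)) => [|j _]; last first.
  have -> : gf0 ^+ k.+1 * ('C(j + k, k)%:R * (A%:P * gf0) ^+ j) =
      (A ^+ j * 'C(j + k, k)%:R)%:P * gf0 ^+ (j + k.+1).
    by rewrite exprMn exprD polyCM polyC_natr rmorphXn; ring.
  by rewrite coefCM.
rewrite -(big_mkord xpredT t) (big_cat_nat _ (n := (n - k.+1)%N.+1)) //=; last by lia.
rewrite [X in _ + X]big_nat_cond [X in _ + X]big1 ?addr0 => [|j /andP[/andP[hj _] _]].
  apply: eq_big_nat => j /andP[_ hj]; rewrite /t coef_gf0X subnDA.
  by rewrite (_ : (j + k.+1 <= n)%N) //; lia.
by rewrite /t coef_gf0X (_ : (j + k.+1 <= n)%N = false) ?mulr0 //; lia.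
Qed.

Lemma coef_gfpow0X_rec A N k n : (n < N)%N ->
  (gfpow A N 0 ^+ k.+1)`_n.+1 =
    A * ((gfpow A N 0 ^+ k.+1)`_n + (if n is n'.+1 then (gfpow A N 0 ^+ k.+1)`_n' else 0))
    + ((gfpow A N 0 ^+ k)`_n + (if n is n'.+1 then (gfpow A N 0 ^+ k)`_n' else 0)).
Proof.
move=> nN; have /agreeP dQ : agree N (den A * gfpow A N 0 ^+ k.+1) (gf0 * gfpow A N 0 ^+ k).
  by rewrite exprS mulrA; apply: agreeMr; apply: agree_den_gfpow0.
have := dQ n.+1 nN; rewrite /den mulrBl mul1r coefB -mulrA coefCM !coef_gf0M => <-.
by rewrite addrC subrK.
Qed.

End Series.

Definition good_word m r (s : seq nat) := (count (pred1 m) s == r) && isolated_zeros s.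

Definition nwords m L (P : pred (seq nat)) : nat :=
  \sum_(w : L.-tuple 'I_m.+1) P (map val w).

Lemma words_countE m L r : words_count m L r = nwords m L (good_word m r).
Proof.
rewrite /words_count /nwords -sum1_card big_mkcond /=; apply: eq_bigr => w _.
by rewrite inE /good_word count_map; case: ifP.
Qed.

Lemma eq_nwords m L P P' : P =1 P' -> nwords m L P = nwords m L P'.
Proof. by move=> PP'; apply: eq_bigr => w _; rewrite PP'. Qed.

Lemma nwords0 m P : nwords m 0 P = P [::].
Proof.
rewrite /nwords (eq_bigr (fun _ => P [::] : nat)) => [|w _]; last by rewrite tuple0.
by rewrite sum_nat_const card_tuple mul1n.
Qed.

Lemma nwords_cons m L P :
  nwords m L.+1 P = \sum_(v < m.+1) nwords m L (fun s => P (val v :: s)).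
Proof.
rewrite /nwords pair_big /=.
rewrite (reindex (fun vw : 'I_m.+1 * L.-tuple 'I_m.+1 => [tuple of vw.1 :: vw.2])) //=.
exists (fun w : L.+1.-tuple 'I_m.+1 => (thead w, [tuple of behead w])).
  by move=> [v w] _ /=; rewrite theadE; congr pair; apply: val_inj.
by move=> w _; rewrite [in RHS](tuple_eta w); apply: val_inj.
Qed.

Lemma isolated_zeros_cons v s : isolated_zeros (v :: s) =
  (if s is y :: _ then ~~ ((v == 0) && (y == 0)) else true) && isolated_zeros s.
Proof. by case: s. Qed.

Section Words.
Variable m' : nat.
Local Notation m := m'.+1.

Lemma nwords_first L P : nwords m L.+1 P =
  nwords m L (fun s => P (0 :: s)) + \sum_(i < m') nwords m L (fun s => P (i.+1 :: s))
  + nwords m L (fun s => P (m :: s)).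
Proof. by rewrite nwords_cons big_ord_recl big_ord_recr addnA. Qed.

Lemma good_word_mid i s r : i < m' -> good_word m r (i.+1 :: s) = good_word m r s.
Proof.
move=> lt_im; rewrite /good_word isolated_zeros_cons /= eqSS (ltn_eqF lt_im) add0n.
by case: s.
Qed.

Lemma good_word_max s r :
  good_word m r (m :: s) = if r is r'.+1 then good_word m r' s else false.
Proof. by rewrite /good_word isolated_zeros_cons /= eqxx; case: r; case: s. Qed.

(* The word count in the indexing of [c_m(n, k)], including [c_m(0, 0) = 1]. *)
Definition cwords n k : nat :=
  if n is n'.+1 then (if k is k'.+1 then words_count m n' k' else 0) else k == 0.

Lemma nwords_nonzero_first L r :
  \sum_(i < m') nwords m L (fun s => good_word m r (i.+1 :: s))
  + nwords m L (fun s => good_word m r (m :: s)) = m' * cwords L.+1 r.+1 + cwords L.+1 r.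
Proof.
congr (_ + _).
  rewrite (eq_bigr (fun _ => words_count m L r)) ?sum_nat_const ?card_ord // => i _.
  by rewrite words_countE; apply: eq_nwords => s; rewrite good_word_mid.
case: r => [|r]; first by rewrite /nwords big1 // => w _; rewrite good_word_max.
by rewrite /= words_countE; apply: eq_nwords => s; rewrite good_word_max.
Qed.

Lemma words_count_first L r : words_count m L.+1 r =
  nwords m L (fun s => good_word m r (0 :: s)) + (m' * cwords L.+1 r.+1 + cwords L.+1 r).
Proof. by rewrite -nwords_nonzero_first words_countE nwords_first addnA. Qed.

Lemma nwords_zero_first L r :
  nwords m L (fun s => good_word m r (0 :: s)) = m' * cwords L r.+1 + cwords L r.
Proof.
case: L => [|L]; first by rewrite nwords0 /cwords /good_word muln0; case: r.
rewrite -nwords_nonzero_first nwords_first {1}/nwords big1 ?add0n // => w _.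
by rewrite /good_word /= andbF.
Qed.

Lemma cwords_rec n k : cwords n.+1 k.+1 =
  m' * (cwords n k.+1 + (if n is n'.+1 then cwords n' k.+1 else 0))
  + (cwords n k + (if n is n'.+1 then cwords n' k else 0)).
Proof.
case: n => [|n]; first by rewrite /cwords words_countE nwords0 /good_word muln0; case: k.
by rewrite [LHS]/cwords words_count_first nwords_zero_first; lia.
Qed.

End Words.

Section WordSeries.
Variables (R : comNzRingType) (m' : nat).
Local Open Scope ring_scope.

Lemma coef_gfpow0X_cwords N n k :
  (n <= N)%N -> (gfpow (m'%:R : R) N 0 ^+ k)`_n = (cwords m' n k)%:R.
Proof.
elim/ltn_ind: n k => n IH k nN; case: k => [|k]; first by rewrite expr0 coef1; case: n {IH nN}.
case: n IH nN => [|n] IH nN; first by rewrite coef_exp_small // coef_gfpow_small.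
rewrite coef_gfpow0X_rec // cwords_rec natrD natrM !natrD.
by case: n IH nN => [|n] IH nN; rewrite !IH //; lia.
Qed.

End WordSeries.

Section Corollary.
Variables (f : nat -> nat -> nat) (c : nat -> nat -> nat -> nat).
Hypotheses (hf01 : f 0 1 = 1) (hf02 : f 0 2 = 1)
  (hf0 : forall n, 3 <= n -> f 0 n = 0)
  (hf : forall m n, 1 <= m -> 1 <= n ->
     f m n = f m.-1 n + \sum_(1 <= i < n) f m.-1 i * f m (n - i))
  (hc00 : forall m, 1 <= m -> c m 0 0 = 1)
  (hcn0 : forall m n, 1 <= m -> 1 <= n -> c m n 0 = 0)
  (hc : forall m n k, 1 <= m -> 1 <= k -> k <= n ->
     c m n k = \sum_(1 <= i < (n - k + 1).+1) f m.-1 i * c m (n - i) k.-1).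
Local Open Scope ring_scope.

Lemma f_coef M N i : (0 < i <= N)%N -> (f M i)%:R = (gfpow M%:R N 0)`_i :> int.
Proof.
elim: M i => [|M IH] i iN.
  case/andP: iN => i0 iN.
  have /agreeP -> // : agree N (gfpow (0%:R : int) N 0) (gf0 int).
    by have := agree_den_gfpow0 (0%:R : int) N; rewrite /den mul0r subr0 mul1r.
  rewrite /gf0 coefD coefX coefXn.
  by case: i i0 {iN} => [|[|[|i]]] //= _; rewrite ?hf01 ?hf02 ?hf0 ?addr0 ?add0r.
apply: (@coef_invert_transform _ N (gfpow M%:R N 0) _ (fun i => (f M i)%:R)
                                   (fun i => (f M.+1 i)%:R)) => //.
- exact: coef_gfpow_small.
- exact: coef_gfpow_small.
- by rewrite -natr1; apply: agree_gfpow0_invert.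
- move=> j /andP[j0 _]; rewrite hf // natrD natr_sum; congr (_ + _)%R.
  by apply: eq_bigr => l _; rewrite natrM.
Qed.

Lemma c_coef m n k :
  (0 < m)%N -> (k <= n)%N -> (c m n k)%:R = (gfpow m.-1%:R n 0 ^+ k)`_n :> int.
Proof.
move=> m0 kn.
apply: (@coef_convolution_power _ n _ (fun i => (f m.-1 i)%:R) (fun n k => (c m n k)%:R)).
- exact: coef_gfpow_small.
- by move=> i /f_coef.
- by rewrite hc00.
- by move=> n' /(hcn0 m0) ->.
- move=> n' k' kn'; rewrite hc // addn1 subnSK // natr_sum.
  by apply: eq_bigr => i _; rewrite natrM.
- by rewrite kn leqnn.
Qed.

Lemma c_words m n k :
  (0 < m)%N -> (0 < k)%N -> (k <= n)%N -> c m n k = words_count m n.-1 k.-1.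
Proof.
move=> m0 k0 kn; apply: (mulrIn (@oner_neq0 int)); rewrite c_coef //.
case: m m0 => // m' _; rewrite coef_gfpow0X_cwords //.
by case: n kn => [|n]; case: k k0.
Qed.

Lemma c_closed m n k : (0 < m)%N -> (0 < k)%N -> (k <= n)%N ->
  c m n k = (\sum_(0 <= j < (n - k).+1)
              (m - 1) ^ j * 'C(j + k - 1, k - 1) * 'C(j + k, n - j - k))%N.
Proof.
move=> m0 k0 kn; apply: (mulrIn (@oner_neq0 int)); rewrite c_coef //.
case: k k0 kn => // k _ kn.
rewrite (agreeP _ _ _ (agree_gfpow0X _ _ _)) // coef_gfpow // natr_sum.
apply: eq_big_nat => j _.
by rewrite !natrM natrX subn1 addnS !subn1.
Qed.

Lemma c1_binomial n k : (0 < k)%N -> (k <= n)%N -> c 1 n k = 'C(k, n - k).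
Proof.
move=> k0 kn; rewrite c_closed // big_ltn // big_nat_cond big1 ?addn0 => [|j].
  by rewrite add0n expn0 mul1n binn mul1n subn0.
by case/andP=> /andP[j0 _] _; rewrite subnn exp0n.
Qed.

Lemma c_closed_half m n k : (1 < m)%N -> (0 < k)%N -> (k <= uphalf n)%N ->
  c m n k = (\sum_(uphalf n - k <= j < (n - k).+1)
               (m - 1) ^ j * 'C(j + k - 1, k - 1) * 'C(j + k, n - j - k))%N.
Proof.
move=> m1 k0 kn; have n2 := odd_double_half n; rewrite uphalf_half in kn *.
rewrite c_closed ?(ltnW m1) //; last by lia.
rewrite (big_cat_nat _ (n := odd n + n./2 - k)) //=; last by lia.
rewrite big_nat_cond big1 ?add0n // => j /andP[/andP[_ hj] _].
by rewrite (@bin_small (j + k)) ?muln0 //; lia.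
Qed.

End Corollary.

Theorem corollary20 (f : nat -> nat -> nat) (c : nat -> nat -> nat -> nat)
  (hf01 : f 0 1 = 1) (hf02 : f 0 2 = 1)
  (hf0 : forall n, 3 <= n -> f 0 n = 0)
  (hf : forall m n, 1 <= m -> 1 <= n ->
     f m n = f m.-1 n + \sum_(1 <= i < n) f m.-1 i * f m (n - i))
  (hc00 : forall m, 1 <= m -> c m 0 0 = 1)
  (hcn0 : forall m n, 1 <= m -> 1 <= n -> c m n 0 = 0)
  (hc : forall m n k, 1 <= m -> 1 <= k -> k <= n ->
     c m n k = \sum_(1 <= i < (n - k + 1).+1) f m.-1 i * c m (n - i) k.-1) :
  (forall m n k, 1 <= m -> 1 <= k -> k <= n ->
     c m n k = words_count m n.-1 k.-1)
  /\ (forall n k, 1 <= k -> k <= n -> c 1 n k = 'C(k, n - k))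
  /\ (forall m n k, 1 < m -> 1 <= k -> k <= uphalf n ->
     c m n k = \sum_(uphalf n - k <= j < (n - k).+1)
                 (m - 1) ^ j * 'C(j + k - 1, k - 1) * 'C(j + k, n - j - k)).
Proof.
split; last split.
- exact: c_words hf01 hf02 hf0 hf hc00 hcn0 hc.
- exact: c1_binomial hf01 hf02 hf0 hf hc00 hcn0 hc.
- exact: c_closed_half hf01 hf02 hf0 hf hc00 hcn0 hc.
Qed.
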